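(* Let $\sigma$ be a completely erasing $k$-block substitution with $w_\epsilon\ne1^k$ that satisfies the optimality condition. Suppose the vanishing order satisfies $$\lim_{|w|\to\infty}\frac{|w|}{\epsilon(w)}=\infty,$$ meaning that for every $M>0$ there is $N$ such that $|w|/\epsilon(w)>M$ for all $w\in\{0,1\}^*$ with $|w|>N$. Then $f_\sigma$ has infinite topological entropy.
   Context: Notation: $\mathbb I=[0,1]$. $\{0,1\}^*$ and $\{0,1\}^\omega$ denote finite and infinite binary words, and $\epsilon$ is the empty word. For a word $w$, set $0.w=\sum_iw_i2^{-i}$. For $x\in(0,1]$, $\widetilde x$ is the unique infinite binary expansion of $x$ not ending in $0^\infty$. Fix $k\ge2$. An erasing $k$-block substitution is a map $\sigma:\{0,1\}^k\to\{0,1\}^*$ with exactly one block $w_\epsilon$ such that $\sigma(w_\epsilon)=\epsilon$. $\sigma$ is alternating if there are $\sigma_1,\dots,\sigma_k:\{0,1\}\to\{0,1\}^*$ with $\sigma(b_1\cdots b_k)=\sigma_1(b_1)\cdots\sigma_k(b_k)$. It is then extended to all finite or infinite words by $\sigma(u)=\prod_j\sigma_{((j-1)\bmod k)+1}(u_j)$. $\sigma$ is completely erasing if it is erasing and alternating, and every $w\in\{0,1\}^*$ satisfies $\sigma^n(w)=\epsilon$ for some $n\in\mathbb N$. The least such $n$ is the vanishing order $\epsilon(w)$. The map $f_\sigma:\mathbb I\to\mathbb I$ is defined by $f_\sigma(x)=0.\sigma(\widetilde x)$ if $x\in(0,1]$ and $\widetilde x\neq w_\epsilon^\infty$, and $f_\sigma(x)=0$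 otherwise. Optimality condition: every $w\in\{0,1\}^\omega$ can be written as $w=\prod_{i\ge1}\sigma(b_i)$ with blocks $b_i\in\{0,1\}^k$ satisfying $\sigma(b_i)\ne\epsilon$. Topological entropy (Bowen–Dinaburg, for a possibly discontinuous $f$): let $d_n(x,y)=\max_{0\le i\le n}|f^i(x)-f^i(y)|$. A set $S$ is $(n,\delta)$-separated if $d_n(x,y)\ge\delta$ for all distinct $x,y\in S$. Let $s(n,\delta)$ be the maximal cardinality of an $(n,\delta)$-separated subset of $\mathbb I$. Then $h(f)=\lim_{\delta\to0}\limsup_{n\to\infty}\frac1n\log s(n,\delta)$. *)

From HB Require Import structures.
From mathcomp Require Import all_boot all_order all_algebra.
From mathcomp Require Import all_classical all_reals all_analysis.
Set Implicit Arguments. Unset Strict Implicit. Unset Printing Implicit Defensive.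
Import Order.TTheory GRing.Theory Num.Theory.
Import numFieldNormedType.Exports.
Local Open Scope classical_set_scope.
Local Open Scope ring_scope.

Section Defs.
Variable R : realType.

(* finite binary words are [seq bool]; infinite binary words are [nat -> bool]
   (0-indexed: letter w_{i+1} of the paper is [w i]). *)

Definition binval (w : seq bool) : R :=
  \sum_(i < size w) (nth false w i)%:R / 2 ^+ i.+1.

Definition nonterm_expansion (x : R) (u : nat -> bool) : Prop :=
  (forall N, exists2 n, (N <= n)%N & u n) /\
  (fun m => \sum_(i < m) (u i)%:R / 2 ^+ i.+1 : R) @ \oo --> x.

(* x~ : the (unique, for x in (0,1]) such expansion, chosen classically *)
Definition tilde (x : R) : nat -> bool :=
  xget (fun _ => false) [set u | nonterm_expansion x u].

(* An alternating k-block substitution is given by its components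
   sigma_1, ..., sigma_k, here [sig 0, ..., sig (k-1)] (indices >= k unused). *)
Definition subst_word (k : nat) (sig : nat -> bool -> seq bool) (u : seq bool)
  : seq bool :=
  flatten [seq sig (j %% k)%N (nth false u j) | j <- iota 0 (size u)].

Definition subst_chunks (k : nat) (sig : nat -> bool -> seq bool)
  (u : nat -> bool) (j : nat) : seq bool := sig (j %% k)%N (u j).

Definition ocat (c : nat -> seq bool) (m : nat) : seq bool :=
  flatten [seq c j | j <- iota 0 m].

Definition binval_cat (c : nat -> seq bool) : R :=
  limn (fun m => binval (ocat c m) : R).

Definition erasing_with (k : nat) (sig : nat -> bool -> seq bool)
  (weps : seq bool) : Prop :=
  size weps = k /\ subst_word k sig weps = [::] /\
  (forall b, size b = k -> subst_word k sig b = [::] -> b = weps).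

Definition completely_erasing (k : nat) (sig : nat -> bool -> seq bool)
  (weps : seq bool) : Prop :=
  erasing_with k sig weps /\
  forall w : seq bool, exists n, iter n (subst_word k sig) w = [::].

Definition vanishing_order (k : nat) (sig : nat -> bool -> seq bool)
  (w : seq bool) (n : nat) : Prop :=
  iter n (subst_word k sig) w = [::] /\
  forall m, iter m (subst_word k sig) w = [::] -> (n <= m)%N.

Definition cat_is (c : nat -> seq bool) (w : nat -> bool) : Prop :=
  forall m j, (j < size (ocat c m))%N -> nth false (ocat c m) j = w j.

Definition optimality (k : nat) (sig : nat -> bool -> seq bool) : Prop :=
  forall w : nat -> bool, exists b : nat -> seq bool,
    (forall i, size (b i) = k /\ subst_word k sig (b i) != [::]) /\
    cat_is (fun i => subst_word k sig (b i)) w.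

Definition periodic (k : nat) (weps : seq bool) : nat -> bool :=
  fun j => nth false weps (j %% k)%N.

Definition f_sigma (k : nat) (sig : nat -> bool -> seq bool)
  (weps : seq bool) (x : R) : R :=
  if `[< 0 < x <= 1 /\ tilde x <> periodic k weps >]
  then binval_cat (subst_chunks k sig (tilde x))
  else 0.

Definition dist_n (f : R -> R) (n : nat) (x y : R) : R :=
  \big[Num.max/0]_(i < n.+1) `|iter i f x - iter i f y|.

Definition separated (f : R -> R) (n : nat) (delta : R) (S : seq R) : Prop :=
  uniq S /\ (forall x, x \in S -> 0 <= x <= 1) /\
  (forall x y, x \in S -> y \in S -> x != y -> delta <= dist_n f n x y).

Definition sep_card (f : R -> R) (n : nat) (delta : R) : R :=
  sup [set (size S)%:R | S in [set S | separated f n delta S]].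

Definition entropy_delta (f : R -> R) (delta : R) : \bar R :=
  limn_esup (fun n => (ln (sep_card f n delta) / n%:R)%:E).

Definition top_entropy (f : R -> R) : \bar R :=
  lim (entropy_delta f @ 0^'+).

End Defs.

From Pilot Require Import Defs.
From HB Require Import structures.
From mathcomp Require Import all_boot all_order all_algebra.
From mathcomp Require Import all_classical all_reals all_analysis.
From mathcomp Require Import ring lra zify.
Set Implicit Arguments. Unset Strict Implicit. Unset Printing Implicit Defensive.
Import Order.TTheory GRing.Theory Num.Theory.
Import numFieldNormedType.Exports.

(* Points of (0,1] are identified with their nonterminating binary expansions;
   on the values of aperiodic words, f_sigma acts as the substitution sigma.
   Optimality lets us pull an aperiodic word back through sigma while
   prescribing any finite prefix u (the image then starts with sigma(u)).
   Complete erasure makes every finite word vanish, so prescribing words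
   W_0, ..., W_{m-1} that vanish after T steps, we find one aperiodic word
   whose image after j T steps starts with W_j ("horseshoe").  Taking for
   the W_j the 2^l words p_0 0 p_1 0 ... p_{l-1} 0 gives 2^(l m) points that
   are (m T, 2^-2l)-separated, hence entropy at least (l / T) ln 2 at small
   scales; the growth hypothesis on vanishing orders makes l / T arbitrarily
   large.  The file develops, in order: finite and infinite words, preimages
   and the horseshoe, values of words and the action of f_sigma, separated
   sets and entropy, the cylinder words, and finally the theorem. *)

Lemma ocatS (c : nat -> seq bool) m : ocat c m.+1 = ocat c m ++ c m.
Proof. by rewrite /ocat -addn1 iotaD map_cat flatten_cat /= cats0. Qed.

Lemma ocatD (c : nat -> seq bool) m n :
  ocat c (m + n) = ocat c m ++ ocat (fun j => c (m + j)) n.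
Proof.
elim: n => [|n IH]; first by rewrite addn0 /ocat /= cats0.
by rewrite addnS !ocatS IH catA.
Qed.

Lemma ocat_ext (c c' : nat -> seq bool) m :
  (forall j, (j < m)%N -> c j = c' j) -> ocat c m = ocat c' m.
Proof.
elim: m => [|m IH] H //; rewrite !ocatS IH ?H // => j Hj; apply: H; lia.
Qed.

Lemma ocat_nil (c : nat -> seq bool) m :
  (forall j, (j < m)%N -> c j = [::]) -> ocat c m = [::].
Proof.
move=> H; rewrite (@ocat_ext c (fun=> [::])) //.
by elim: m {H} => // m IH; rewrite ocatS IH.
Qed.

Lemma ocat_nil_chunk (c : nat -> seq bool) m j :
  (j < m)%N -> ocat c m = [::] -> c j = [::].
Proof.
move=> Hj; rewrite -(subnKC Hj) ocatD ocatS -catA.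
by case: (ocat c j) => //; case: (c j).
Qed.

Lemma size_ocat_mono (c : nat -> seq bool) m m' :
  (m <= m')%N -> (size (ocat c m) <= size (ocat c m'))%N.
Proof. by move=> H; rewrite -(subnKC H) ocatD size_cat leq_addr. Qed.

Lemma nth_ocat_mono (c : nat -> seq bool) m m' j :
  (m <= m')%N -> (j < size (ocat c m))%N ->
  nth false (ocat c m') j = nth false (ocat c m) j.
Proof. by move=> H Hj; rewrite -(subnKC H) ocatD nth_cat Hj. Qed.

Lemma size_ocat_nonempty (c : nat -> seq bool) m :
  (forall i, c i != [::]) -> (m <= size (ocat c m))%N.
Proof.
move=> H; elim: m => [|m IH] //; rewrite ocatS size_cat -addn1 leq_add //.
by rewrite lt0n size_eq0.
Qed.

Lemma subst_word_ocat k sig u :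
  subst_word k sig u = ocat (fun j => sig (j %% k)%N (nth false u j)) (size u).
Proof. by []. Qed.

Lemma flatten_nseqS (B : seq bool) t :
  flatten (nseq t.+1 B) = flatten (nseq t B) ++ B.
Proof. by elim: t => [|t IH]; rewrite /= ?cats0 // -catA -IH. Qed.

Lemma size_flatten_nseq (B : seq bool) t :
  size (flatten (nseq t B)) = (t * size B)%N.
Proof. by elim: t => [|t IH] //=; rewrite size_cat IH mulSn. Qed.

Lemma nth_flatten_nseq (B : seq bool) t i : (i < t * size B)%N ->
  nth false (flatten (nseq t B)) i = nth false B (i %% size B).
Proof.
elim: t i => [|t IH] i /=; first by rewrite mul0n.
rewrite nth_cat mulSn => Hi; case: ifP => Hl; first by rewrite modn_small.
rewrite IH; last lia.
by rewrite -(modnDr (i - size B)) subnK //; lia.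
Qed.

(* Infinite binary words are [nat -> bool].  The horseshoe only uses aperiodic
   words: they have infinitely many ones and differ from w_eps^oo, so f_sigma
   acts on their values by sigma. *)
Definition eventually_periodic (a : nat -> bool) : Prop :=
  exists N p, (0 < p)%N /\ forall n, (N <= n)%N -> a (n + p)%N = a n.

Definition prepend (u : seq bool) (s : nat -> bool) (j : nat) : bool :=
  if (j < size u)%N then nth false u j else s (j - size u)%N.

Lemma prepend_nil v : prepend [::] v = v.
Proof. by apply: funext => j; rewrite /prepend /= subn0. Qed.

Lemma eventually_periodic_prepend u v :
  eventually_periodic (prepend u v) -> eventually_periodic v.
Proof.
move=> [N [p [p0 H]]]; exists N, p; split => // n Hn.
have := H (n + size u)%N ltac:(lia); rewrite /prepend.
rewrite !ifF; try lia.
by rewrite addnK (_ : n + size u + p - size u = n + p)%N //; lia.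
Qed.

Definition unbounded_cat (c : nat -> seq bool) : Prop :=
  forall n, exists m, (n <= size (ocat c m))%N.

Definition pow2_indicator (n : nat) : bool := [exists i : 'I_n.+1, n == 2 ^ i].

Lemma pow2_indicator_aperiodic : ~ eventually_periodic pow2_indicator.
Proof.
move=> [N [p [p0 H]]].
set m := (N + p)%N.
have Hm : (m < 2 ^ m)%N by apply: ltn_expl.
have := H (2 ^ m)%N; rewrite /pow2_indicator.
have -> : [exists i : 'I_(2 ^ m).+1, 2 ^ m == 2 ^ i].
  by apply/existsP; exists (@Ordinal (2 ^ m).+1 m (ltnW Hm)).
have -> : [exists i : 'I_(2 ^ m + p).+1, 2 ^ m + p == 2 ^ i] = false.
  apply/negbTE/existsP => [[i /eqP Hi]].
  case: (leqP i m) => Him; have := leq_pexp2l (isT : 0 < 2)%N Him.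
    lia.
  rewrite expnS; lia.
by move/(_ ltac:(lia)).
Qed.

Section Substitution.
Variables (k : nat) (sig : nat -> bool -> seq bool).
Hypothesis k_gt0 : (0 < k)%N.

Definition subst_step (a b : nat -> bool) : Prop :=
  cat_is (subst_chunks k sig a) b /\ unbounded_cat (subst_chunks k sig a).

Lemma periodic_tail_iter (a : nat -> bool) N p q :
  (forall n, (N <= n)%N -> a (n + p)%N = a n) ->
  forall n, (N <= n)%N -> a (n + q * p)%N = a n.
Proof.
move=> H n Hn; elim: q => [|q IH]; first by rewrite addn0.
by rewrite mulSn addnCA addnC H ?IH //; lia.
Qed.

(* sigma maps eventually periodic words to eventually periodic words: if a
   has period p from N on, the chunks of sigma(a) have period pk, so sigma(a)
   is an initial word followed by a repeated block B. *)
Lemma subst_eventually_periodic a b :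
  eventually_periodic a -> subst_step a b -> eventually_periodic b.
Proof.
move=> [N [p [p0 Hp]]] [Hcat Hunb].
set c := subst_chunks k sig a; set P := (p * k)%N.
have P0 : (0 < P)%N by rewrite muln_gt0 p0.
have c_periodic t j : (N <= j)%N -> c (j + t * P)%N = c j.
  move=> Hj; rewrite /c /subst_chunks /P mulnA [(j + _)%N]addnC modnMDl addnC.
  by rewrite (_ : t * p * k = t * k * p)%N ?(periodic_tail_iter _ Hp) //; lia.
set A := ocat c N; set B := ocat (fun j => c (N + j)%N) P.
have ocat_period t : ocat c (N + t * P) = A ++ flatten (nseq t B).
  elim: t => [|t IH]; first by rewrite mul0n addn0 /= cats0.
  rewrite mulSn addnCA addnC ocatD IH flatten_nseqS catA; congr (_ ++ _).
  apply: ocat_ext => j _; rewrite addnAC c_periodic //; lia.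
have size_period t : size (ocat c (N + t * P)) = (size A + t * size B)%N.
  by rewrite ocat_period size_cat size_flatten_nseq.
have B_gt0 : (0 < size B)%N.
  rewrite lt0n; apply/negP => /eqP B0.
  have [m Hm] := Hunb (size A).+1.
  have := size_ocat_mono c (_ : (m <= N + m * P)%N); rewrite size_period B0.
  by move=> /(_ ltac:(nia)) /(leq_trans Hm); rewrite muln0 addn0 ltnn.
exists (size A), (size B); split => // n Hn.
have [t Ht] : exists t, t = n.+2 by exists n.+2.
have Hs : (n + size B < size (ocat c (N + t * P)))%N.
  by rewrite size_period Ht; nia.
rewrite -(Hcat _ _ Hs) -(Hcat (N + t * P)%N n); last by rewrite size_period Ht; nia.
rewrite ocat_period !nth_cat !ifF; try lia.
rewrite !nth_flatten_nseq; try (rewrite Ht; nia).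
by rewrite -(modnDr (n - size A)) (_ : n + size B - size A = n - size A + size B)%N //; lia.
Qed.

Section Preimages.
Variable weps : seq bool.
Hypothesis sig_erasing : erasing_with k sig weps.

Lemma erased_letter j : sig (j %% k)%N (nth false weps (j %% k)) = [::].
Proof.
case: sig_erasing => Hs [Hn _]; rewrite -{1}(modn_mod j k).
by apply: (ocat_nil_chunk _ Hn); rewrite Hs ltn_mod.
Qed.

Definition pad_length (u : seq bool) : nat := ((size u) %/ k).+1 * k.

(* The continuation s with u s = u w' b_0 b_1 ..., where w' is the suffix of
   w_eps that pads u to length [pad_length u]. *)
Definition block_tail (u : seq bool) (b : nat -> seq bool) (j : nat) : bool :=
  let r := (pad_length u - size u)%N in
  if (j < r)%N then nth false weps ((size u + j) %% k)
  else nth false (b ((j - r) %/ k)) ((j - r) %% k).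

(* The letters of w' are erased, so the chunks of sigma(u s) concatenate to
   sigma(u) sigma(b_0) sigma(b_1) ... *)
Lemma block_tail_chunks u (b : nat -> seq bool) i :
  (forall i, size (b i) = k) ->
  ocat (subst_chunks k sig (prepend u (block_tail u b))) (pad_length u + i * k) =
  subst_word k sig u ++ ocat (fun i => subst_word k sig (b i)) i.
Proof.
move=> Hb; set base := pad_length u; set r := (base - size u)%N.
have Hbase : (size u < base)%N by apply: ltn_ceil.
set c := subst_chunks k sig _.
have c_prefix j : (j < size u)%N -> c j = sig (j %% k)%N (nth false u j).
  by move=> Hj; rewrite /c /subst_chunks /prepend Hj.
have c_padding j : (size u <= j)%N -> (j < base)%N -> c j = [::].
  move=> H1 H2; rewrite /c /subst_chunks /prepend ltnNge H1 /= /block_tail.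
  rewrite ifT -/base -/r; last by rewrite /r; lia.
  by rewrite subnKC //; apply: erased_letter.
have c_block i' t : (t < k)%N ->
    c (base + i' * k + t)%N = sig t (nth false (b i') t).
  move=> Ht; rewrite /c /subst_chunks /prepend ifF; last lia.
  rewrite /block_tail -/base -/r ifF /r; last lia.
  rewrite (_ : base + i' * k + t - size u - (base - size u) = i' * k + t)%N; last lia.
  have Emod : ((i' * k + t) %% k = t)%N by rewrite modnMDl modn_small.
  rewrite divnMDl // divn_small // addn0 Emod -addnA.
  by rewrite /base /pad_length modnMDl Emod.
elim: i => [|i IH].
  rewrite mul0n addn0 cats0 /= (_ : base = size u + r)%N; last by rewrite /r; lia.
  rewrite ocatD (@ocat_nil _ r) ?cats0.
    by rewrite subst_word_ocat; apply: ocat_ext => j Hj; rewrite c_prefix.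
  move=> j Hj; apply: c_padding; rewrite /r in Hj; lia.
rewrite mulSn addnCA addnC ocatD IH ocatS catA; congr (_ ++ _).
rewrite subst_word_ocat Hb; apply: ocat_ext => t Ht.
by rewrite c_block // modn_small.
Qed.

Lemma block_preimage u (b : nat -> seq bool) v :
  (forall i, size (b i) = k /\ subst_word k sig (b i) != [::]) ->
  cat_is (fun i => subst_word k sig (b i)) v ->
  subst_step (prepend u (block_tail u b)) (prepend (subst_word k sig u) v).
Proof.
move=> Hb Hbv; set c := subst_chunks k sig (prepend u (block_tail u b)).
have ocat_blocks i := block_tail_chunks u i (fun i => (Hb i).1).
split.
- move=> m j Hj.
  have Hm : (m <= pad_length u + m * k)%N by nia.
  rewrite -(nth_ocat_mono Hm Hj) ocat_blocks nth_cat /prepend.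
  case: ifP => // Hl; apply: Hbv.
  move: (size_ocat_mono c Hm) Hj; rewrite -/c ocat_blocks size_cat; lia.
- move=> n; exists (pad_length u + n * k)%N; rewrite ocat_blocks size_cat.
  have := @size_ocat_nonempty (fun i => subst_word k sig (b i)) n (fun i => (Hb i).2).
  lia.
Qed.

Hypothesis sig_optimal : optimality k sig.

(* One step backwards: an aperiodic continuation of sigma(u) is the image of an
   aperiodic continuation of u (aperiodicity pulls back by
   [subst_eventually_periodic]). *)
Lemma one_step_preimage u v :
  ~ eventually_periodic (prepend (subst_word k sig u) v) ->
  exists s, ~ eventually_periodic (prepend u s) /\
    subst_step (prepend u s) (prepend (subst_word k sig u) v).
Proof.
move=> Hv; have [b [Hb Hbv]] := sig_optimal v.
have Hs := block_preimage u Hb Hbv.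
by exists (block_tail u b); split => // Hper; apply: Hv; apply: subst_eventually_periodic Hper Hs.
Qed.

Fixpoint subst_chain (n : nat) (a c : nat -> bool) : Prop :=
  match n with
  | 0 => a = c
  | n.+1 => exists b, ~ eventually_periodic b /\ subst_step a b /\ subst_chain n b c
  end.

Lemma subst_chain_cat n n' a b c :
  subst_chain n a b -> subst_chain n' b c -> subst_chain (n + n') a c.
Proof.
elim: n a => [|n IH] a /=; first by move=> ->.
by move=> [b' [H1 [H2 H3]]] H4; exists b'; split => //; split => //; apply: IH H3 H4.
Qed.

Lemma iterated_preimage n u v : ~ eventually_periodic v ->
  exists s, ~ eventually_periodic (prepend u s) /\
    subst_chain n (prepend u s) (prepend (iter n (subst_word k sig) u) v).
Proof.
elim: n u => [|n IH] u Hv.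
  by exists v; split => // /eventually_periodic_prepend.
have [s' [H1 H2]] := IH (subst_word k sig u) Hv.
have [s [H3 H4]] := one_step_preimage H1.
by exists s; split => //; exists (prepend (subst_word k sig u) s'); rewrite iterSr.
Qed.

(* Induction on m: a = W_0 s, where
   sigma^T(W_0 s) is the word provided for W_1, ..., W_{m-1}. *)
Lemma horseshoe T m (W : nat -> seq bool) :
  (forall j, (j < m)%N -> iter T (subst_word k sig) (W j) = [::]) ->
  exists a, ~ eventually_periodic a /\ forall j, (j < m)%N ->
    exists s, ~ eventually_periodic (prepend (W j) s) /\
      subst_chain (j * T) a (prepend (W j) s).
Proof.
elim: m W => [|m IH] W HW.
  by exists pow2_indicator; split => //; apply: pow2_indicator_aperiodic.
have [a' [Ha' Hj]] := IH (fun j => W j.+1) (fun j Hj => HW j.+1 Hj).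
have [s [Hs HR]] := iterated_preimage T (W 0%N) Ha'.
rewrite HW // prepend_nil in HR.
exists (prepend (W 0%N) s); split => // -[|j] Hjm; first by exists s.
have [s' [Hs' HR']] := Hj j Hjm.
by exists s'; split => //; rewrite mulSn; apply: subst_chain_cat HR HR'.
Qed.

End Preimages.
End Substitution.

Local Open Scope ring_scope.

Section Values.
Variable R : realType.

Lemma exp2V_gt0 n : 0 < 2 ^- n :> R.
Proof. by rewrite invr_gt0 exprn_gt0. Qed.

Lemma exp2VS n : 2 ^- n = 2 * 2 ^- n.+1 :> R.
Proof. by rewrite exprS invfM mulrA divff ?mul1r // pnatr_eq0. Qed.

Lemma exp2V_le n m : (n <= m)%N -> 2 ^- m <= 2 ^- n :> R.
Proof.
move=> H; rewrite -(subnKC H); elim: (m - n)%N => [|j IH]; first by rewrite addn0.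
by rewrite addnS; apply: le_trans IH; have := exp2VS (n + j); have := exp2V_gt0 (n + j).+1; lra.
Qed.

Definition partial_val (a : nat -> bool) (m : nat) : R :=
  \sum_(i < m) (a i)%:R / 2 ^+ i.+1.

Lemma partial_valS a m : partial_val a m.+1 = partial_val a m + (a m)%:R * 2 ^- m.+1.
Proof. by rewrite /partial_val big_ord_recr. Qed.

Lemma partial_val0 a : partial_val a 0 = 0.
Proof. by rewrite /partial_val big_ord0. Qed.

Lemma digit_term_bounds (a : nat -> bool) m :
  0 <= ((a m)%:R * 2 ^- m.+1 : R) <= 2 ^- m.+1.
Proof.
by have := exp2V_gt0 m.+1; case: (a m) => /= H; rewrite ?mul1r ?mul0r; apply/andP; split; lra.
Qed.

Lemma partial_val_mono a : nondecreasing_seq (partial_val a).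
Proof.
apply/nondecreasing_seqP => n; rewrite partial_valS.
by have := digit_term_bounds a n; lra.
Qed.

Lemma partial_val_tail a m j :
  partial_val a (m + j) <= partial_val a m + (2 ^- m - 2 ^- (m + j)).
Proof.
elim: j => [|j IH]; first by rewrite addn0; lra.
rewrite addnS partial_valS; have := digit_term_bounds a (m + j); have := exp2VS (m + j); lra.
Qed.

Lemma partial_val_le1 a m : partial_val a m <= 1.
Proof.
have := partial_val_tail a 0 m; rewrite partial_val0 expr0 invr1 add0n.
by have := exp2V_gt0 m; lra.
Qed.

Lemma partial_val_cvg a : cvgn (partial_val a).
Proof.
apply: nondecreasing_is_cvgn; first exact: partial_val_mono.
by exists 1 => _ [n _ <-]; apply: partial_val_le1.
Qed.

Definition seq_val (a : nat -> bool) : R := limn (partial_val a).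

Lemma partial_val_le_seq_val a m : partial_val a m <= seq_val a.
Proof. by apply: nondecreasing_cvgn_le; [exact: partial_val_mono | exact: partial_val_cvg]. Qed.

Lemma seq_val_le a m : seq_val a <= partial_val a m + 2 ^- m.
Proof.
apply: limr_le; first exact: partial_val_cvg.
near=> n; have Hn : (m <= n)%N by near: n; exact: nbhs_infty_ge.
rewrite -(subnKC Hn); have := partial_val_tail a m (n - m).
by have := exp2V_gt0 (m + (n - m)); lra.
Unshelve. all: by end_near.
Qed.

Lemma partial_val_agree (a a' : nat -> bool) i :
  (forall j, (j < i)%N -> a j = a' j) -> partial_val a i = partial_val a' i.
Proof. by move=> H; apply: eq_bigr => j _; rewrite H. Qed.

Definition infinitely_many_ones (a : nat -> bool) : Prop :=
  forall N, exists2 n, (N <= n)%N & a n.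

Lemma aperiodic_infinitely_many_ones a :
  ~ eventually_periodic a -> infinitely_many_ones a.
Proof.
move=> H N; apply: contrapT => HN; apply: H; exists N, 1%N; split => // n Hn.
have zero_tail m : (N <= m)%N -> a m = false.
  by move=> Hm; apply/negbTE/negP => am; apply: HN; exists m.
by rewrite !zero_tail //; lia.
Qed.

(* If a and a' first differ at i, with a_i = 1 > a'_i = 0, and a has
   infinitely many ones, then 0.a' < 0.a (the expansion of 0.a' is at most
   0.a_0 ... a_{i-1} 0 1 1 1 ...). *)
Lemma seq_val_lt (a a' : nat -> bool) i :
  (forall j, (j < i)%N -> a j = a' j) ->
  a i -> ~~ a' i -> infinitely_many_ones a -> seq_val a' < seq_val a.
Proof.
move=> Hag Ha Ha' Hinf; have [n Hn an] := Hinf i.+1.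
have E := partial_val_agree Hag.
have h1 := seq_val_le a' i.+1; rewrite partial_valS (negbTE Ha') mul0r addr0 in h1.
have h2 := partial_val_le_seq_val a n.+1; rewrite partial_valS an mul1r in h2.
have h3 := partial_val_mono a Hn; rewrite partial_valS Ha mul1r in h3.
by have := exp2V_gt0 n.+1; lra.
Qed.

Lemma seq_val_gap (a a' : nat -> bool) i :
  (forall j, (j < i)%N -> a j = a' j) ->
  a i -> ~~ a' i -> ~~ a' i.+1 -> 2 ^- i.+2 <= seq_val a - seq_val a'.
Proof.
move=> Hag Ha Ha' Ha2; have E := partial_val_agree Hag.
have h1 := seq_val_le a' i.+2.
rewrite !partial_valS (negbTE Ha') (negbTE Ha2) !mul0r !addr0 in h1.
have h2 := partial_val_le_seq_val a i.+1; rewrite partial_valS Ha mul1r in h2.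
by have := exp2VS i.+1; lra.
Qed.

Lemma first_difference (a a' : nat -> bool) : (exists i, a i != a' i) ->
  exists i, [/\ forall j, (j < i)%N -> a j = a' j & a i != a' i].
Proof.
move=> Hex; exists (ex_minn Hex); case: ex_minnP => i Hi Hmin; split => // j Hj.
by apply/eqP; apply: contraT => Hne'; have := Hmin j Hne'; lia.
Qed.

Lemma seq_val_inj (a a' : nat -> bool) :
  infinitely_many_ones a -> infinitely_many_ones a' ->
  seq_val a = seq_val a' -> a = a'.
Proof.
move=> H H' Hv; apply: contrapT => Hne.
have [i [Hag]] : exists i, [/\ forall j, (j < i)%N -> a j = a' j & a i != a' i].
  apply: first_difference; apply: contrapT => Hn; apply: Hne; apply: funext => j.
  by apply/eqP; apply: contrapT => Hj; apply: Hn; exists j; apply/negP.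
case Ea: (a i); case Ea': (a' i) => // _.
- by have := seq_val_lt Hag; rewrite Ea Ea' Hv ltxx => /(_ isT isT H).
- have Hag' j : (j < i)%N -> a' j = a j by move/Hag.
  by have := seq_val_lt Hag'; rewrite Ea Ea' Hv ltxx => /(_ isT isT H').
Qed.

Lemma tilde_seq_val a : infinitely_many_ones a -> tilde (seq_val a) = a.
Proof.
move=> H; apply: xget_unique; first by split => //; apply: partial_val_cvg.
by move=> u [Hu Hc]; apply: seq_val_inj => //; apply/cvg_lim.
Qed.

Lemma seq_val_bounds a : infinitely_many_ones a -> 0 < seq_val a <= 1.
Proof.
move=> H; have [n _ an] := H 0%N.
have h1 := seq_val_le a 0; rewrite partial_val0 expr0 invr1 add0r in h1.
have h2 := partial_val_le_seq_val a n.+1; rewrite partial_valS an mul1r in h2.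
have h3 := partial_val_mono a (leq0n n); rewrite partial_val0 in h3.
by have := exp2V_gt0 n.+1; move=> h4; apply/andP; split; lra.
Qed.

End Values.

Section Dynamics.
Variable R : realType.

Lemma binval_partial_val w : binval R w = partial_val R (fun j => nth false w j) (size w).
Proof. by []. Qed.

Lemma binval_bounds w : 0 <= binval R w <= 1.
Proof.
rewrite binval_partial_val partial_val_le1 andbT.
by rewrite -(partial_val0 R (nth false w)); apply: partial_val_mono.
Qed.

Lemma binval_prefix_le w r : binval R w <= binval R (w ++ r).
Proof.
rewrite !binval_partial_val size_cat.
rewrite (@partial_val_agree R (nth false w) (nth false (w ++ r))).
  by apply: partial_val_mono; apply: leq_addr.
by move=> j Hj; rewrite nth_cat Hj.
Qed.

Lemma binval_cat_bounds c : 0 <= binval_cat R c <= 1.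
Proof.
pose u m := binval R (ocat c m).
have u_mono : nondecreasing_seq u.
  by apply/nondecreasing_seqP => m; rewrite /u ocatS binval_prefix_le.
have u_cvg : cvgn u.
  apply: nondecreasing_is_cvgn => //; exists 1 => _ [n _ <-].
  by have /andP[] := binval_bounds (ocat c n).
apply/andP; split.
  apply: le_trans (nondecreasing_cvgn_le u_mono u_cvg 0%N).
  by have /andP[] := binval_bounds (ocat c 0).
apply: limr_le => //; near=> m.
by have /andP[] := binval_bounds (ocat c m).
Unshelve. all: by end_near.
Qed.

Lemma iter_f_sigma_unit k sig weps i (x : R) : 0 <= x <= 1 ->
  0 <= iter i (f_sigma k sig weps) x <= 1.
Proof.
case: i => [|i] //= _; rewrite /f_sigma; case: ifP => _.
  exact: binval_cat_bounds.
by rewrite lexx ler01.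
Qed.

Lemma binval_cat_seq_val c b :
  cat_is c b -> unbounded_cat c -> binval_cat R c = seq_val R b.
Proof.
move=> Hc Hu; pose u m := partial_val R b (size (ocat c m)).
have -> : binval_cat R c = limn u.
  suff E : (fun m => binval R (ocat c m)) = u by rewrite /binval_cat E.
  by apply: funext => m; apply: eq_bigr => i _; rewrite (Hc m).
have u_mono : nondecreasing_seq u.
  by move=> m n Hmn; apply: partial_val_mono; apply: size_ocat_mono.
have u_cvg : cvgn u.
  by apply: nondecreasing_is_cvgn => //; exists 1 => _ [n _ <-]; apply: partial_val_le1.
apply/le_anti/andP; split.
  by apply: limr_le => //; near=> m; apply: partial_val_le_seq_val.
apply: limr_le; first exact: partial_val_cvg.
near=> n; have [m Hm] := Hu n.
by apply: le_trans (nondecreasing_cvgn_le u_mono u_cvg m); apply: partial_val_mono.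
Unshelve. all: by end_near.
Qed.

(* w_eps^oo is periodic, so aperiodic words avoid the exceptional case of
   f_sigma. *)
Lemma periodic_eventually_periodic k weps :
  (0 < k)%N -> eventually_periodic (Defs.periodic k weps).
Proof. by move=> k0; exists 0%N, k; split => // n _; rewrite /Defs.periodic modnDr. Qed.

Lemma f_sigma_step k sig weps a b : (0 < k)%N ->
  ~ eventually_periodic a -> subst_step k sig a b ->
  f_sigma k sig weps (seq_val R a) = seq_val R b.
Proof.
move=> k0 Ha [Hc Hu]; have Hinf := aperiodic_infinitely_many_ones Ha.
have Hdom : 0 < seq_val R a <= 1 /\ tilde (seq_val R a) <> Defs.periodic k weps.
  split; first exact: seq_val_bounds.
  by rewrite tilde_seq_val // => E; apply: Ha; rewrite E; apply: periodic_eventually_periodic.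
by rewrite /f_sigma asboolT // tilde_seq_val //; apply: binval_cat_seq_val.
Qed.

Lemma iter_f_sigma_chain k sig weps n a c : (0 < k)%N ->
  ~ eventually_periodic a -> subst_chain k sig n a c ->
  iter n (f_sigma k sig weps) (seq_val R a) = seq_val R c.
Proof.
move=> k0; elim: n a => [|n IH] a Ha; first by move=> /= ->.
by move=> [b [Hb [Hab Hbc]]]; rewrite iterSr (f_sigma_step _ k0 Ha Hab) IH.
Qed.

End Dynamics.

Section Entropy.
Variable R : realType.
Variable f : R -> R.
Hypothesis f_unit : forall i x, 0 <= x <= 1 -> 0 <= iter i f x <= 1.

(* An (n,d)-separated set has at most (floor(1/d) + 1)^(n+1) points: the map
   x |-> (floor(f^i(x)/d))_{i <= n} is injective on it. *)
Lemma separated_size_bound d n S : 0 < d ->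
  Defs.separated f n d S -> (size S <= (Num.truncn d^-1).+1 ^ n.+1)%N.
Proof.
move=> d0 [Suniq [S01 Ssep]]; set K := (Num.truncn d^-1).+1.
pose code (x : R) : {ffun 'I_n.+1 -> 'I_K} :=
  [ffun i : 'I_n.+1 => inord (Num.truncn (iter i f x / d))].
have code_lt i x : x \in S -> (Num.truncn (iter i f x / d) < K)%N.
  move=> Hx; rewrite /K ltnS; apply: le_truncn.
  have /andP[_ h] := f_unit i (S01 x Hx).
  by rewrite -[X in _ <= X]mul1r ler_pM2r // invr_gt0.
have code_inj : {in S &, injective code}.
  move=> x y Hx Hy Hxy; apply: contrapT => /eqP Hne.
  have := Ssep x y Hx Hy Hne; apply/negP; rewrite -ltNge /dist_n.
  apply: bigmax_lt => // i _.
  have := congr1 (fun g : {ffun 'I_n.+1 -> 'I_K} => nat_of_ord (g i)) Hxy.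
  rewrite !ffunE /= !inordK ?code_lt // => Htr.
  have /andP[hx0 _] := f_unit i (S01 x Hx); have /andP[hy0 _] := f_unit i (S01 y Hy).
  have := truncn_itv (divr_ge0 hx0 (ltW d0)); have := truncn_itv (divr_ge0 hy0 (ltW d0)).
  rewrite Htr -!natr1 => /andP[hy1 hy2] /andP[hx1 hx2].
  rewrite -(divfK (lt0r_neq0 d0) (iter i f x)) -(divfK (lt0r_neq0 d0) (iter i f y)).
  set X := iter i f x / d in hx1 hx2 *; set Y := iter i f y / d in hy1 hy2 hx1 hx2 *.
  by rewrite ltr_norml; apply/andP; split; nra.
have code_uniq : uniq (map code S) by rewrite (map_inj_in_uniq code_inj).
have := card_uniqP code_uniq; rewrite size_map => <-.
by apply: leq_trans (max_card _) _; rewrite card_ffun !card_ord.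
Qed.

Lemma sep_card_ge_size d n S : 0 < d ->
  Defs.separated f n d S -> (size S)%:R <= sep_card f n d.
Proof.
move=> d0 HS; apply: sup_upper_bound; last by exists S.
split; first by exists (size S)%:R, S.
exists ((Num.truncn d^-1).+1 ^ n.+1)%:R => _ [S' HS' <-].
by rewrite ler_nat; apply: separated_size_bound HS'.
Qed.

Lemma esup_ge (u : nat -> \bar R) c :
  (forall N, exists2 n, (N <= n)%N & (c <= u n)%E) -> (c <= limn_esup u)%E.
Proof.
move=> H; rewrite limn_esup_lim; apply: lime_ge; first exact: is_cvg_esups.
apply: nearW => N; have [n Hn Hc] := H N.
by apply: le_trans Hc _; apply: ereal_sup_ubound; exists n.
Qed.

Lemma entropy_delta_ge_rate d l T : 0 < d -> (0 < T)%N ->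
  (forall m, exists2 S, Defs.separated f (m * T) d S & size S = (2 ^ (l * m))%N) ->
  ((l%:R * ln 2 / T%:R : R)%:E <= entropy_delta f d)%E.
Proof.
move=> d0 T0 Hsep; apply: esup_ge => N.
exists (N.+1 * T)%N; first by nia.
have [S HS HsizeS] := Hsep N.+1.
have Hcard := sep_card_ge_size d0 HS; rewrite HsizeS in Hcard.
have pow_gt0 : 0 < (2 ^ (l * N.+1))%N%:R :> R by rewrite ltr0n expn_gt0.
have Hln : ln (2 ^ (l * N.+1))%N%:R <= ln (sep_card f (N.+1 * T) d).
  by rewrite ler_ln // posrE; apply: lt_le_trans Hcard.
rewrite natrX lnXn // in Hln.
rewrite lee_fin ler_pdivlMr ?ltr0n ?muln_gt0 //; apply: le_trans Hln.
have T_neq0 : T%:R != 0 :> R by rewrite pnatr_eq0 -lt0n.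
suff -> : l%:R * ln 2 / T%:R * (N.+1 * T)%N%:R = ln 2 *+ (l * N.+1) :> R by [].
by rewrite -mulr_natr !natrM; field.
Qed.

End Entropy.

Lemma top_entropy_infinite (R : realType) (f : R -> R) :
  (forall B : R, exists2 d : R, 0 < d & forall d', 0 < d' -> d' < d ->
     (B%:E <= entropy_delta f d')%E) ->
  top_entropy f = +oo%E.
Proof.
move=> H; rewrite /top_entropy; apply: cvg_lim => //.
apply/cvgeyPge => B; have [d d0 Hd] := H B.
near=> x; apply: Hd.
  by near: x; apply: nbhs_right_gt.
by near: x; apply: nbhs_right_lt.
Unshelve. all: by end_near.
Qed.

(* The word p_0 0 p_1 0 ... p_{l-1} 0 of length 2l: the zeros make the values
   of words starting with different such blocks 2^-2l apart. *)
Definition cylinder_word l (p : l.-tuple bool) : seq bool :=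
  mkseq (fun i => if odd i then false else nth false p i./2) l.*2.

Lemma size_cylinder_word l (p : l.-tuple bool) : size (cylinder_word p) = l.*2.
Proof. exact: size_mkseq. Qed.

Lemma prepend_cylinder_word l (p : l.-tuple bool) s j : (j < l.*2)%N ->
  prepend (cylinder_word p) s j = if odd j then false else nth false p j./2.
Proof. by move=> Hj; rewrite /prepend size_cylinder_word Hj nth_mkseq. Qed.

(* Nonterminating words starting with different cylinder words first differ
   at an even position i < 2l followed by a common 0, so their values are at
   least 2^-(i+2) >= 2^-2l apart. *)
Lemma cylinder_separation (R : realType) l (p p' : l.-tuple bool) s s' : p != p' ->
  infinitely_many_ones (prepend (cylinder_word p) s) ->
  infinitely_many_ones (prepend (cylinder_word p') s') ->
  2 ^- l.*2 <= `|seq_val R (prepend (cylinder_word p) s)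
                 - seq_val R (prepend (cylinder_word p') s')|.
Proof.
move=> Hne Hinf Hinf'.
have [t Ht Hdiff] : exists2 t, (t < l)%N & nth false p t != nth false p' t.
  apply: contrapT => Hn; move/eqP: Hne; apply; apply: val_inj.
  apply: (@eq_from_nth _ false); first by rewrite !size_tuple.
  move=> t; rewrite size_tuple => Ht; apply/eqP; apply: contrapT => Hd.
  by apply: Hn; exists t => //; apply/negP.
set b := prepend (cylinder_word p) s; set b' := prepend (cylinder_word p') s'.
have Ht2 : (t.*2 < l.*2)%N by rewrite ltn_double.
have Hbt : b t.*2 != b' t.*2.
  by rewrite /b /b' !prepend_cylinder_word // odd_double doubleK.
have [i [Hagree Hi]] : exists i, [/\ forall j, (j < i)%N -> b j = b' j & b i != b' i].
  by apply: first_difference; exists t.*2.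
have Hit : (i <= t.*2)%N.
  by rewrite leqNgt; apply/negP => H; move: Hbt; rewrite Hagree // eqxx.
have HiL : (i.+1 < l.*2)%N by move: Hit Ht; rewrite -!muln2; lia.
have Hodd : odd i = false.
  by apply: contraTF Hi => Ho; rewrite /b /b' !prepend_cylinder_word ?Ho //; lia.
have Hnext : ~~ b i.+1 /\ ~~ b' i.+1.
  by rewrite /b /b' !prepend_cylinder_word //= Hodd.
have Hscale : 2 ^- l.*2 <= 2 ^- i.+2 :> R by apply: exp2V_le; lia.
move: Hi; case Ebi: (b i); case Ebi': (b' i) => // _.
- have := seq_val_gap R Hagree; rewrite Ebi Ebi' => /(_ isT isT Hnext.2) H.
  by apply: le_trans Hscale (le_trans H (ler_norm _)).
- have Hagree' j : (j < i)%N -> b' j = b j by move/Hagree.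
  have := seq_val_gap R Hagree'; rewrite Ebi Ebi' => /(_ isT isT Hnext.1) H.
  by rewrite distrC; apply: le_trans Hscale (le_trans H (ler_norm _)).
Qed.

Section Cylinders.
Variables (k : nat) (sig : nat -> bool -> seq bool).

Lemma vanishing_order_exists w :
  (forall w, exists n, iter n (subst_word k sig) w = [::]) ->
  exists n, vanishing_order k sig w n.
Proof.
move=> Hcomp; have Hex : exists n, iter n (subst_word k sig) w == [::].
  by have [n Hn] := Hcomp w; exists n; apply/eqP.
exists (ex_minn Hex); case: ex_minnP => n /eqP Hn Hmin.
by split => // m Hm; apply: Hmin; apply/eqP.
Qed.

Lemma iter_subst_nil n : iter n (subst_word k sig) [::] = [::].
Proof. by elim: n => //= n ->. Qed.

(* Take T the largest vanishing order of
   a cylinder word, attained by some cylinder word of length 2l > N. *)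
Lemma cylinders_vanish_fast (R : realType) (M : R) :
  (forall w, exists n, iter n (subst_word k sig) w = [::]) ->
  (forall M : R, 0 < M -> exists N : nat, forall (w : seq bool) (n : nat),
      (N < size w)%N -> vanishing_order k sig w n -> M < (size w)%:R / n%:R) ->
  0 < M ->
  exists l T, [/\ (0 < T)%N,
    forall p : l.-tuple bool, iter T (subst_word k sig) (cylinder_word p) = [::]
    & M * T%:R < l%:R].
Proof.
move=> Hcomp Hvan M0.
have [N HN] := Hvan (2 * M) ltac:(lra).
have [eps Heps] := boolp.choice (fun w => vanishing_order_exists w Hcomp).
set l := N.+1; set T := (\max_(p : l.-tuple bool) eps (cylinder_word p))%N.
have [pmax Hpmax] := @bigop.eq_bigmax _ (fun p : l.-tuple bool => eps (cylinder_word p))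
  ltac:(by rewrite card_tuple card_bool expn_gt0).
have HMT : 2 * M < (l.*2)%:R / T%:R.
  rewrite -(size_cylinder_word pmax); apply: HN.
    by rewrite size_cylinder_word -muln2; lia.
  by rewrite /T Hpmax; apply: Heps.
have T0 : (0 < T)%N.
  by rewrite lt0n; apply/eqP => T0; move: HMT; rewrite T0 invr0 mulr0; lra.
exists l, T; split => //.
  move=> p; have Hle : (eps (cylinder_word p) <= T)%N.
    exact: (@bigop.leq_bigmax _ (fun p => eps (cylinder_word p)) p).
  by rewrite -(subnK Hle) iterD (proj1 (Heps _)) iter_subst_nil.
move: HMT; rewrite ltr_pdivlMr ?ltr0n // -muln2 natrM; lra.
Qed.

Section Horseshoe.
Variables (R : realType) (weps : seq bool).
Hypotheses (k_gt0 : (0 < k)%N) (sig_erasing : erasing_with k sig weps)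
  (sig_optimal : optimality k sig).
Let f := f_sigma (R := R) k sig weps.

Lemma cylinder_orbit l T m :
  (forall p : l.-tuple bool, iter T (subst_word k sig) (cylinder_word p) = [::]) ->
  forall om : {ffun 'I_m -> l.-tuple bool}, exists a,
    infinitely_many_ones a /\ forall j : 'I_m, exists s,
      infinitely_many_ones (prepend (cylinder_word (om j)) s) /\
      iter (j * T) f (seq_val R a) = seq_val R (prepend (cylinder_word (om j)) s).
Proof.
move=> HT om.
pose W j := if insub j is Some i then cylinder_word (om i) else [::].
have HW j : (j < m)%N -> iter T (subst_word k sig) (W j) = [::].
  by move=> _; rewrite /W; case: insub => [i|]; [apply: HT | apply: iter_subst_nil].
have [a [Ha Hj]] := horseshoe k_gt0 sig_erasing sig_optimal HW.
exists a; split => [|j]; first exact: aperiodic_infinitely_many_ones.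
have [s [Hs Hchain]] := Hj j (ltn_ord j); rewrite /W valK in Hs Hchain.
exists s; split; first exact: aperiodic_infinitely_many_ones.
exact: iter_f_sigma_chain.
Qed.

Lemma cylinder_separated_set l T m (d : R) :
  (forall p : l.-tuple bool, iter T (subst_word k sig) (cylinder_word p) = [::]) ->
  0 < d -> d <= 2 ^- l.*2 ->
  exists2 S, Defs.separated f (m * T) d S & size S = (2 ^ (l * m))%N.
Proof.
move=> HT d0 Hd; have [A HA] := boolp.choice (@cylinder_orbit l T m HT).
pose X om := seq_val R (A om).
have X_sep om om' : om != om' -> d <= dist_n f (m * T) (X om) (X om').
  move=> Hne; have [j Hj] : exists j, om j != om' j.
    apply/existsP; apply: contraNT Hne => /existsPn Heq.
    by apply/eqP/ffunP => j; apply/eqP; move: (Heq j); rewrite negbK.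
  have [s [Hs E]] := (HA om).2 j; have [s' [Hs' E']] := (HA om').2 j.
  apply: le_trans Hd (le_trans (cylinder_separation R Hj Hs Hs') _).
  have Hjn : (j * T < (m * T).+1)%N by have := ltn_ord j; nia.
  rewrite -E -E' /dist_n.
  exact: (le_bigmax _ (fun i : 'I_(m * T).+1 => `|iter i f (X om) - iter i f (X om')|)
                      (Ordinal Hjn)).
have X_inj : injective X.
  move=> om om' HX; apply: contrapT => /eqP /X_sep; rewrite HX /dist_n.
  apply/negP; rewrite -ltNge; apply: le_lt_trans d0.
  by apply: bigmax_le => // i _; rewrite subrr normr0.
exists (map X (enum {: {ffun 'I_m -> l.-tuple bool}})); last first.
  by rewrite size_map -cardE card_ffun card_tuple card_bool card_ord expnM.
split; first by rewrite map_inj_uniq ?enum_uniq.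
split.
  move=> _ /mapP [om _ ->]; have /andP[X_gt0 X_le1] := seq_val_bounds R (HA om).1.
  by rewrite (ltW X_gt0) X_le1.
move=> _ _ /mapP [om _ ->] /mapP [om' _ ->] Hne; apply: X_sep.
by apply: contraNneq Hne => ->.
Qed.
End Horseshoe.
End Cylinders.

Theorem mainTheorem18 (R : realType) (k : nat) (sig : nat -> bool -> seq bool)
    (weps : seq bool) :
  (2 <= k)%N ->
  completely_erasing k sig weps ->
  weps != nseq k true ->
  optimality k sig ->
  (forall M : R, 0 < M -> exists N : nat, forall (w : seq bool) (n : nat),
      (N < size w)%N -> vanishing_order k sig w n ->
      M < (size w)%:R / n%:R) ->
  top_entropy (f_sigma (R := R) k sig weps) = +oo%E.
Proof.
move=> k_ge2 [sig_erasing sig_vanishes] _ sig_optimal Hvan.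
have k_gt0 : (0 < k)%N by lia.
apply: top_entropy_infinite => B.
have ln2_gt0 : 0 < ln (2 : R) by apply: ln_gt0; lra.
have M_gt0 : 0 < (`|B| + 1) / ln 2 by rewrite divr_gt0 // ltr_pwDr.
have [l [T [T_gt0 HT HlT]]] := cylinders_vanish_fast sig_vanishes Hvan M_gt0.
exists (2 ^- l.*2); first exact: exp2V_gt0.
move=> d d_gt0 d_small.
have Hsep m := cylinder_separated_set k_gt0 sig_erasing sig_optimal m HT d_gt0 (ltW d_small).
apply: le_trans (entropy_delta_ge_rate (@iter_f_sigma_unit R k sig weps) d_gt0 T_gt0 Hsep).
rewrite lee_fin ler_pdivlMr ?ltr0n //.
move: HlT; rewrite -(ltr_pM2r ln2_gt0) mulrAC divfK ?lt0r_neq0 //.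
by have := ler_norm B; have : 0 <= T%:R :> R by []; nra.
Qed.
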